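(* Let $R$ be a commutative ring, $n\ge 1$, and suppose $\varphi=(1\perp\varepsilon)^t\,\psi_n\,(1\perp\varepsilon)$ for some $\varepsilon\in{\rm E}_{2n-1}(R)$. Then ${\rm E}_\varphi(R)={\rm E}_{2n-1}(R)$.
   Context: All rings are commutative with identity. ${\rm E}_m(R)$ is the subgroup of ${\rm SL}_m(R)$ generated by elementary matrices $I_m+\lambda e_{ij}$ ($i\neq j$, $\lambda\in R$). $\psi_n=\sum_{i=1}^n e_{2i-1,2i}-\sum_{i=1}^n e_{2i,2i-1}$ is the standard $2n\times2n$ symplectic matrix. $1\perp\varepsilon$ denotes $\begin{pmatrix}1&0\\0&\varepsilon\end{pmatrix}$. Elements of $R^m$ are row vectors, ${}^t$ is transpose. For an invertible alternating (i.e. of the form $\nu-\nu^t$) $2n\times2n$ matrix $\varphi$ write $\varphi=\begin{pmatrix}0&-c\\ c^t&\nu\end{pmatrix}$, $\varphi^{-1}=\begin{pmatrix}0&d\\ -d^t&\mu\end{pmatrix}$ with $c,d\in R^{2n-1}$, and set $\alpha_\varphi(v)=I_{2n-1}+d^tv\nu$, $\beta_\varphi(v)=I_{2n-1}+\mu v^tc$ for $v\in R^{2n-1}$. ${\rm E}_\varphi(R)$ is the subgroup of ${\rm GL}_{2n-1}(R)$ generated by all $\alpha_\varphi(v),\beta_\varphi(v)$. *)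

From HB Require Import structures.
From mathcomp Require Import all_boot all_order all_algebra.
Set Implicit Arguments. Unset Strict Implicit. Unset Printing Implicit Defensive.
Import GRing.Theory.
Local Open Scope ring_scope.

Inductive gen_group (R : comPzRingType) (m : nat) (gen : 'M[R]_m -> Prop)
  : 'M[R]_m -> Prop :=
| gen_group1 : gen_group gen 1%:M
| gen_groupM g A : gen g -> gen_group gen A -> gen_group gen (g *m A)
| gen_groupV g h A : gen g -> g *m h = 1%:M -> h *m g = 1%:M ->
    gen_group gen A -> gen_group gen (h *m A).

Definition elementary (R : comPzRingType) (m : nat) (A : 'M[R]_m) : Prop :=
  exists (i j : 'I_m) (l : R), i != j /\ A = 1%:M + l *: delta_mx i j.

Definition Egrp (R : comPzRingType) (m : nat) : 'M[R]_m -> Prop :=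
  gen_group (@elementary R m).

(* psi_n, as a (1 + (2n-1)) x (1 + (2n-1)) matrix; 0-based indices:
   entry (2k, 2k+1) = 1, entry (2k+1, 2k) = -1. *)
Definition psi (R : comPzRingType) (n : nat) : 'M[R]_(1 + (n.*2).-1) :=
  \matrix_(i, j) (if ~~ odd i && (j == i.+1 :> nat) then 1
                  else if odd i && (j.+1 == i :> nat) then -1 else 0).

Definition perp1 (R : comPzRingType) (m : nat) (e : 'M[R]_m) : 'M[R]_(1 + m) :=
  block_mx 1%:M 0 0 e.

Section Ephi.
Variables (R : comPzRingType) (m : nat).
(* phi = [[0, -c], [c^t, nu]], phiinv = [[0, d], [-d^t, mu]] *)
Variables (phi phiinv : 'M[R]_(1 + m)).
Definition c_of : 'rV[R]_m := - ursubmx phi.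
Definition nu_of : 'M[R]_m := drsubmx phi.
Definition d_of : 'rV[R]_m := ursubmx phiinv.
Definition mu_of : 'M[R]_m := drsubmx phiinv.
Definition alpha_phi (v : 'rV[R]_m) : 'M[R]_m := 1%:M + d_of^T *m v *m nu_of.
Definition beta_phi (v : 'rV[R]_m) : 'M[R]_m := 1%:M + mu_of *m v^T *m c_of.
Definition Ephi_gen (A : 'M[R]_m) : Prop :=
  exists v, A = alpha_phi v \/ A = beta_phi v.
Definition Ephi : 'M[R]_m -> Prop := gen_group Ephi_gen.
End Ephi.

From HB Require Import structures.
From mathcomp Require Import all_boot all_order all_algebra.
From mathcomp Require Import zify ring.
Import GRing.Theory.
Local Open Scope ring_scope.
Set Implicit Arguments. Unset Strict Implicit.

(* Conjugating by 1 _|_ eps transports E_phi to E_psi, and conjugation by an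
   element of E_(2n-1) preserves E_(2n-1); so it suffices to treat phi = psi_n.
   Write psi_n = [[0, u], [-u^T, N]] with u = e_0.  Then psi_n^2 = -1 gives
   u N = 0, N u^T = 0 and N^2 = u^T u - 1.  The first two identities make the
   generators 1 - u^T w N and 1 + N w^T u of E_psi row and column
   transvections, hence products of elementary matrices.  Conversely, by the
   third identity every transvection 1 + u^T r or 1 + s^T u with vanishing
   0-th coordinate is a generator of E_psi, and every other elementary matrix
   is a commutator of two of these. *)

Section GeneratedGroup.
Variables (R : comPzRingType) (m : nat).
Implicit Types (gen : 'M[R]_m -> Prop) (A B P Q : 'M[R]_m).

Lemma gen_group_mul gen A B :
  gen_group gen A -> gen_group gen B -> gen_group gen (A *m B).
Proof.
elim=> [|g A' hg _ IH|g h A' hg gh hg' _ IH] hB.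
- by rewrite mul1mx.
- by rewrite -mulmxA; apply: gen_groupM => //; apply: IH.
- by rewrite -mulmxA; apply: (gen_groupV hg gh hg'); apply: IH.
Qed.

Lemma gen_group_gen gen g : gen g -> gen_group gen g.
Proof. by move=> hg; rewrite -[g]mulmx1; apply: gen_groupM (gen_group1 _). Qed.

Lemma gen_group_sub gen1 gen2 :
  (forall g, gen1 g -> gen_group gen2 g) ->
  (forall g h, gen1 g -> g *m h = 1%:M -> h *m g = 1%:M -> gen_group gen2 h) ->
  forall A, gen_group gen1 A -> gen_group gen2 A.
Proof.
move=> hgen hinv A; elim=> [|g A' hg _ IH|g h A' hg gh hg' _ IH].
- exact: gen_group1.
- exact: gen_group_mul (hgen _ hg) IH.
- exact: gen_group_mul (hinv _ _ hg gh hg') IH.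
Qed.

Lemma gen_group_conj gen1 gen2 P Q :
  P *m Q = 1%:M -> Q *m P = 1%:M ->
  (forall g, gen1 g -> gen2 (P *m g *m Q)) ->
  forall A, gen_group gen1 A -> gen_group gen2 (P *m A *m Q).
Proof.
move=> PQ QP hgen A.
have conjM B C : P *m (B *m C) *m Q = (P *m B *m Q) *m (P *m C *m Q).
  by rewrite !mulmxA -(mulmxA _ Q P) QP mulmx1.
elim=> [|g A' hg _ IH|g h A' hg gh hg' _ IH].
- by rewrite mulmx1 PQ; apply: gen_group1.
- by rewrite conjM; apply: gen_groupM => //; apply: hgen.
- rewrite conjM; apply: (gen_groupV (hgen _ hg)) => //.
  + by rewrite -conjM gh mulmx1 PQ.
  + by rewrite -conjM hg' mulmx1 PQ.
Qed.

Lemma mulmx_inv_uniq A B h : B *m A = 1%:M -> A *m h = 1%:M -> h = B.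
Proof. by move=> BA Ah; rewrite -[h]mul1mx -BA -mulmxA Ah mulmx1. Qed.

End GeneratedGroup.

Section ElementaryGroup.
Variables (R : comPzRingType) (m : nat).
Implicit Types (A B g : 'M[R]_m).

Lemma elementary_inv g :
  elementary g -> exists2 g', elementary g' & g *m g' = 1%:M /\ g' *m g = 1%:M.
Proof.
case=> i [j [l [ij ->]]]; exists (1%:M + (- l) *: delta_mx i j).
  by exists i, j, (- l).
have dd : delta_mx i j *m delta_mx i j = 0 :> 'M[R]_m.
  by rewrite mul_delta_mx_0 // eq_sym.
by split; rewrite mulmxDl mulmxDr !mul1mx mulmxDr mulmx1 -!scalemxAl
  -!scalemxAr dd !scaler0 addr0 scaleNr -addrA ?addNr ?subrr ?addr0.
Qed.

Lemma elementary_tr g : elementary g -> elementary g^T.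
Proof.
case=> i [j [l [ij ->]]]; exists j, i, l; rewrite eq_sym ij.
by rewrite linearD /= trmx1 linearZ /= trmx_delta.
Qed.

Lemma Egrp_mul A B : Egrp A -> Egrp B -> Egrp (A *m B).
Proof. exact: gen_group_mul. Qed.

Lemma Egrp_elementary g : elementary g -> Egrp g.
Proof. exact: gen_group_gen. Qed.

Lemma Egrp_inverse A :
  Egrp A -> exists2 B, Egrp B & A *m B = 1%:M /\ B *m A = 1%:M.
Proof.
elim=> [|g A' hg _ [B hB [AB BA]]|g h A' hg gh hg' _ [B hB [AB BA]]].
- by exists 1%:M; [apply: gen_group1 | rewrite mulmx1].
- have [g' eg' [gg' g'g]] := elementary_inv hg.
  exists (B *m g'); first exact: Egrp_mul hB (Egrp_elementary eg').
  by rewrite !mulmxA -(mulmxA g) AB -(mulmxA B) g'g mulmx1 gg' mulmx1.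
- exists (B *m g); first exact: Egrp_mul hB (Egrp_elementary hg).
  by rewrite !mulmxA -(mulmxA h) AB -(mulmxA B) gh mulmx1 hg' mulmx1.
Qed.

Lemma Egrp_rinv A h : Egrp A -> A *m h = 1%:M -> Egrp h.
Proof.
by move=> hA Ah; have [B hB [_ BA]] := Egrp_inverse hA; rewrite (mulmx_inv_uniq BA Ah).
Qed.

Lemma Egrp_tr A : Egrp A -> Egrp A^T.
Proof.
elim=> [|g A' hg _ IH|g h A' hg gh hg' _ IH].
- by rewrite trmx1; apply: gen_group1.
- by rewrite trmx_mul; apply: Egrp_mul IH (Egrp_elementary (elementary_tr hg)).
- rewrite trmx_mul; apply: Egrp_mul IH _.
  apply: (Egrp_rinv (Egrp_elementary (elementary_tr hg))).
  by rewrite -trmx_mul hg' trmx1.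
Qed.

Lemma Egrp_conj P Q A : Egrp P -> Egrp Q -> Q *m P = 1%:M ->
  Egrp (P *m A *m Q) <-> Egrp A.
Proof.
move=> hP hQ QP; split=> [hA|hA]; last by apply: Egrp_mul (Egrp_mul hP hA) hQ.
have -> : A = Q *m (P *m A *m Q) *m P by rewrite !mulmxA QP mul1mx -mulmxA QP mulmx1.
exact: Egrp_mul (Egrp_mul hQ hA) hP.
Qed.

Lemma Egrp_row_transvection (i0 : 'I_m) (r : 'rV[R]_m) :
  r 0 i0 = 0 -> Egrp (1%:M + (delta_mx i0 0 : 'cV_m) *m r).
Proof.
set u : 'cV_m := delta_mx i0 0; move=> r0; rewrite [r]row_sum_delta.
elim: (index_enum _) => [|j s IH]; first by rewrite big_nil mulmx0 addr0; apply: gen_group1.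
rewrite big_cons; case: (eqVneq j i0) => [->|ji0]; first by rewrite r0 scale0r add0r.
have -> : 1%:M + u *m (r 0 j *: 'e_j + \sum_(k <- s) r 0 k *: 'e_k)
   = (1%:M + r 0 j *: delta_mx i0 j) *m (1%:M + u *m (\sum_(k <- s) r 0 k *: 'e_k)).
  rewrite /u mulmxDl mul1mx mulmxDr mulmx1 -scalemxAl mulmxA mul_delta_mx_0 //.
  by rewrite mul0mx scaler0 addr0 mulmxDr -scalemxAr mul_delta_mx addrA addrAC.
by apply: gen_groupM IH; exists i0, j, (r 0 j); rewrite eq_sym ji0.
Qed.

(* With x = a e_ik and y = e_kj one has x^2 = y^2 = y x = 0, so the
   commutator (1 + x)(1 + y)(1 - x)(1 - y) collapses to 1 + x y. *)
Lemma elementary_commutator (i j k : 'I_m) (a : R) :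
  i != k -> k != j -> i != j ->
  (1%:M + a *: delta_mx i k) *m (1%:M + delta_mx k j) *m (1%:M + (- a) *: delta_mx i k)
    *m (1%:M + (- 1) *: delta_mx k j) = 1%:M + a *: delta_mx i j.
Proof.
move=> /negbTE ik /negbTE kj /negbTE ij.
have ki : (k == i) = false by rewrite eq_sym.
have jk : (j == k) = false by rewrite eq_sym.
have ji : (j == i) = false by rewrite eq_sym.
do ![rewrite mulmxDl | rewrite mulmxDr | rewrite mul1mx | rewrite mulmx1
    | rewrite -scalemxAl | rewrite -scalemxAr | rewrite mul_delta_mx_cond
    | rewrite ki | rewrite jk | rewrite ik | rewrite kj | rewrite ji | rewrite eqxx
    | rewrite mulr0n | rewrite mulr1n | rewrite mul0mx | rewrite mulmx0
    | rewrite scaler0 | rewrite addr0 | rewrite add0r].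
by apply/matrixP => p q; rewrite !mxE; ring.
Qed.

End ElementaryGroup.

Section PerpOne.
Variables (R : comPzRingType) (m : nat).
Implicit Types (a b : 'M[R]_m) (X : 'M[R]_(1 + m)).

Lemma perp1_tr a : (perp1 a)^T = perp1 a^T.
Proof. by rewrite /perp1 tr_block_mx !trmx0 trmx1. Qed.

Lemma perp1_mul a b : perp1 a *m perp1 b = perp1 (a *m b).
Proof. by rewrite /perp1 mulmx_block !mulmx0 !mul0mx !addr0 !add0r mulmx1. Qed.

Lemma perp1_1 : perp1 (1%:M : 'M[R]_m) = 1%:M.
Proof. by rewrite /perp1 -scalar_mx_block. Qed.

Lemma perp1_ur a b X : ursubmx (perp1 a *m X *m perp1 b) = ursubmx X *m b.
Proof.
rewrite -[X]submxK /perp1 !mulmx_block block_mxKur block_mxKur.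
by rewrite !mulmx0 !mul0mx !mul1mx !addr0 !add0r.
Qed.

Lemma perp1_dr a b X : drsubmx (perp1 a *m X *m perp1 b) = a *m drsubmx X *m b.
Proof.
rewrite -[X]submxK /perp1 !mulmx_block block_mxKdr block_mxKdr.
by rewrite !mulmx0 !mul0mx ?addr0 ?add0r.
Qed.

Variables (chi chiinv : 'M[R]_(1 + m)) (eps e' : 'M[R]_m).
Hypotheses (epse' : eps *m e' = 1%:M) (e'eps : e' *m eps = 1%:M).

Local Notation phi := ((perp1 eps)^T *m chi *m perp1 eps).
Local Notation phiinv := (perp1 e' *m chiinv *m (perp1 e')^T).

Lemma alpha_phi_perp1 v :
  alpha_phi phi phiinv v = e' *m alpha_phi chi chiinv (v *m eps^T) *m eps.
Proof.
rewrite /alpha_phi /d_of /nu_of !perp1_tr perp1_ur perp1_dr trmx_mul trmxK.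
by rewrite mulmxDr mulmxDl mulmx1 e'eps !mulmxA.
Qed.

Lemma beta_phi_perp1 v :
  beta_phi phi phiinv v = e' *m beta_phi chi chiinv (v *m e') *m eps.
Proof.
rewrite /beta_phi /mu_of /c_of !perp1_tr perp1_ur perp1_dr trmx_mul mulmxN.
by rewrite mulmxDr mulmxDl mulmx1 e'eps !mulmxN mulNmx !mulmxA.
Qed.

Lemma Ephi_perp1 A : Ephi phi phiinv A <-> Ephi chi chiinv (eps *m A *m e').
Proof.
have cancel_conj B : eps *m (e' *m B *m eps) *m e' = B.
  by rewrite !mulmxA epse' mul1mx -mulmxA epse' mulmx1.
split; first apply: gen_group_conj => // g [v [->|->]].
- by exists (v *m eps^T); left; rewrite alpha_phi_perp1 cancel_conj.
- by exists (v *m e'); right; rewrite beta_phi_perp1 cancel_conj.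
move=> /(gen_group_conj e'eps epse') hA.
have -> : A = e' *m (eps *m A *m e') *m eps.
  by rewrite !mulmxA e'eps mul1mx -mulmxA e'eps mulmx1.
apply: hA => g [w [->|->]].
- exists (w *m e'^T); left; rewrite alpha_phi_perp1.
  by rewrite -(mulmxA w) -trmx_mul epse' trmx1 mulmx1.
- by exists (w *m eps); right; rewrite beta_phi_perp1 -(mulmxA w) epse' mulmx1.
Qed.

End PerpOne.

Section StandardForm.
Variables (R : comPzRingType) (m : nat) (i0 : 'I_m) (N : 'M[R]_m).
Local Notation u := (delta_mx 0 i0 : 'rV[R]_m).
Local Notation chi := (block_mx 0 u (- u^T) N : 'M[R]_(1 + m)).
Hypothesis chi_sq : chi *m chi = - 1%:M.

Lemma standard_form_relations :
  [/\ u *m N = 0, N *m u^T = 0 & N *m N = - 1%:M + u^T *m u].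
Proof.
move: chi_sq; rewrite mulmx_block scalar_mx_block opp_block_mx.
case/eq_block_mx => _ uN Nu NN; split.
- by move: uN; rewrite mul0mx add0r oppr0.
- by move/eqP: Nu; rewrite mulmx0 add0r mulmxN oppr0 oppr_eq0 => /eqP.
- by move: NN; rewrite mulNmx => <-; rewrite addrC addNKr.
Qed.

Lemma alpha_standard w : alpha_phi chi (- chi) w = 1%:M - u^T *m w *m N.
Proof.
by rewrite /alpha_phi /d_of /nu_of opp_block_mx block_mxKur block_mxKdr
  linearN /= mulNmx mulNmx.
Qed.

Lemma beta_standard w : beta_phi chi (- chi) w = 1%:M + N *m w^T *m u.
Proof.
by rewrite /beta_phi /mu_of /c_of opp_block_mx block_mxKur block_mxKdr
  mulNmx mulmxN mulNmx opprK.
Qed.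

Lemma Egrp_alpha_standard w : Egrp (alpha_phi chi (- chi) w).
Proof.
have [_ Nu _] := standard_form_relations.
rewrite alpha_standard -mulmxA -mulmxN trmx_delta.
apply: Egrp_row_transvection; rewrite mxE.
have := congr1 (fun B : 'M[R]_1 => B 0 0) (congr1 (mulmx w) Nu).
by rewrite trmx_delta mulmxA -colE mulmx0 !mxE => ->; rewrite oppr0.
Qed.

Lemma Egrp_beta_standard w : Egrp (beta_phi chi (- chi) w).
Proof.
have [uN _ _] := standard_form_relations.
have -> : beta_phi chi (- chi) w = (1%:M + (delta_mx i0 0 : 'cV_m) *m (N *m w^T)^T)^T.
  by rewrite beta_standard linearD /= trmx1 trmx_mul trmxK trmx_delta.
apply/Egrp_tr/Egrp_row_transvection.
have := congr1 (fun B : 'M[R]_1 => B 0 0) (congr1 (mulmx^~ w^T) uN).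
by rewrite /= -mulmxA -rowE mul0mx !mxE.
Qed.

Lemma Ephi_row_transvection (r : 'rV[R]_m) :
  r *m u^T = 0 -> Ephi chi (- chi) (1%:M + u^T *m r).
Proof.
have [_ _ NN] := standard_form_relations.
move=> ru; apply: gen_group_gen; exists (r *m N); left.
rewrite alpha_standard -!mulmxA NN mulmxDr mulmxN mulmx1 mulmxA ru mul0mx addr0.
by rewrite mulmxN opprK.
Qed.

Lemma Ephi_col_transvection (s : 'rV[R]_m) :
  u *m s^T = 0 -> Ephi chi (- chi) (1%:M + s^T *m u).
Proof.
have [_ _ NN] := standard_form_relations.
move=> us; apply: gen_group_gen; exists (- (N *m s^T)^T); right.
rewrite beta_standard linearN /= trmxK mulmxN mulNmx mulmxA NN mulmxDl mulNmx mul1mx.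
by rewrite -(mulmxA u^T) us mulmx0 addr0 mulNmx opprK.
Qed.

Lemma Ephi_elementary_standard g : elementary g -> Ephi chi (- chi) g.
Proof.
have row l j : j != i0 -> Ephi chi (- chi) (1%:M + l *: delta_mx i0 j).
  move=> ji0; have -> : l *: delta_mx i0 j = u^T *m (l *: delta_mx 0 j).
    by rewrite -scalemxAr trmx_delta mul_delta_mx.
  apply: Ephi_row_transvection.
  by rewrite -scalemxAl trmx_delta mul_delta_mx_0 ?scaler0.
have col l i : i != i0 -> Ephi chi (- chi) (1%:M + l *: delta_mx i i0).
  move=> ii0; have -> : l *: delta_mx i i0 = (l *: delta_mx 0 i)^T *m u.
    by rewrite linearZ /= trmx_delta -scalemxAl mul_delta_mx.
  apply: Ephi_col_transvection.
  by rewrite linearZ /= -scalemxAr trmx_delta mul_delta_mx_0 ?scaler0 // eq_sym.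
case=> i [j [l [ij ->]]].
have [ei | ii0] := eqVneq i i0; first by rewrite ei; apply: row; rewrite -ei eq_sym.
have [-> | ji0] := eqVneq j i0; first exact: col.
rewrite -(elementary_commutator l ii0 _ ij); last by rewrite eq_sym.
apply: gen_group_mul; [apply: gen_group_mul; [apply: gen_group_mul|]|].
- exact: col.
- by rewrite -[delta_mx i0 j]scale1r; apply: row.
- exact: col.
- exact: row.
Qed.

Lemma Ephi_standardE A : Ephi chi (- chi) A <-> Egrp A.
Proof.
split; apply: gen_group_sub.
- by move=> g [w [->|->]]; [apply: Egrp_alpha_standard | apply: Egrp_beta_standard].
- move=> g h [w [->|->]] gh _; apply: Egrp_rinv gh.
    exact: Egrp_alpha_standard.
  exact: Egrp_beta_standard.
- exact: Ephi_elementary_standard.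
- move=> g h /elementary_inv [g' eg' [_ g'g]] gh _.
  by rewrite (mulmx_inv_uniq g'g gh); apply: Ephi_elementary_standard.
Qed.

End StandardForm.

Section Psi.
Variables (R : comPzRingType) (n : nat).
Hypothesis n_gt0 : (0 < n)%N.

Lemma psiE (i j : 'I_(1 + (n.*2).-1)) :
  psi R n i j = if odd i then (if j.+1 == i :> nat then -1 else 0)
                else (if j == i.+1 :> nat then 1 else 0).
Proof. by rewrite mxE; case: (odd i). Qed.

(* Each row of psi_n has a single nonzero entry, +-1, in the column paired
   with i; so row i of psi_n^2 is the sign of i times the row of its partner. *)
Lemma psi_sq : psi R n *m psi R n = - 1%:M.
Proof.
have dimE : (1 + (n.*2).-1)%N = n.*2 by case: n n_gt0.
have mul_single i (p : 'I_(1 + (n.*2).-1)) k :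
    (forall j, j != p -> psi R n i j = 0) ->
    (psi R n *m psi R n) i k = psi R n i p * psi R n p k.
  move=> psi0; rewrite mxE (bigD1 p) //= big1 ?addr0 // => j /psi0 ->.
  by rewrite mul0r.
apply/matrixP => i k; rewrite ![in RHS]mxE.
have ik : (k == i :> nat) = (i == k) by rewrite eq_sym.
have i_lt : (i < n.*2)%N by apply: leq_trans (ltn_ord i) _; rewrite dimE.
case oi: (odd i).
- have i_gt0 : (0 < i)%N by move: oi; case: (nat_of_ord i).
  have p_lt : (i.-1 < 1 + (n.*2).-1)%N by apply: leq_ltn_trans (leq_pred _) (ltn_ord i).
  rewrite (mul_single i (Ordinal p_lt) k); last first.
    move=> j /eqP jp; rewrite psiE oi; case: eqP => // ji.
    by case: jp; apply: val_inj => /=; lia.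
  rewrite !psiE oi /= (_ : odd i.-1 = false); last by move: oi i_gt0; case: (nat_of_ord i) => //= t /negPf.
  have -> : (i.-1.+1 == i :> nat) by apply/eqP; lia.
  have -> : (k == i.-1.+1 :> nat) = (i == k) by rewrite prednK.
  by case: (i == k); rewrite ?mulN1r ?mulr0 ?oppr0.
- have p_lt : (i.+1 < 1 + (n.*2).-1)%N.
    apply: (@leq_trans n.*2); last by rewrite dimE.
    rewrite ltn_neqAle i_lt andbT; apply/negP => /eqP e.
    by move: (odd_double n); rewrite -e /= oi.
  rewrite (mul_single i (Ordinal p_lt) k); last first.
    by move=> j /eqP jp; rewrite psiE oi; case: eqP => // ji; case: jp; apply: val_inj.
  rewrite !psiE oi /= eqxx /= oi mul1r eqSS ik.
  by case: (i == k); rewrite ?oppr0.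
Qed.

Lemma double_pred_gt0 : (0 < (n.*2).-1)%N.
Proof. by case: n n_gt0 => // k _; rewrite doubleS. Qed.

Lemma psi_block :
  psi R n = block_mx 0 (delta_mx 0 (Ordinal double_pred_gt0))
    (- (delta_mx 0 (Ordinal double_pred_gt0))^T) (drsubmx (psi R n)).
Proof.
have ur : ursubmx (psi R n) = delta_mx 0 (Ordinal double_pred_gt0).
  apply/matrixP => i j; rewrite !mxE !ord1 /=.
  by case: j => [[|j] hj]; rewrite /= ?add1n.
rewrite -{1}[psi R n]submxK -ur; congr block_mx.
  by apply/matrixP => i j; rewrite !mxE !ord1.
apply/matrixP => i j; rewrite !mxE !ord1 /=.
by case: i => [[|i] hi] //=; rewrite ?oppr0 //; case: (odd i).
Qed.

End Psi.

Theorem lemma3p11 (R : comPzRingType) (n : nat) (hn : (0 < n)%N)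
  (eps : 'M[R]_((n.*2).-1)) (heps : Egrp eps)
  (phiinv : 'M[R]_(1 + (n.*2).-1))
  (hinv1 : ((perp1 eps)^T *m psi R n *m perp1 eps) *m phiinv = 1%:M)
  (hinv2 : phiinv *m ((perp1 eps)^T *m psi R n *m perp1 eps) = 1%:M) :
  forall A : 'M[R]_((n.*2).-1),
    Ephi ((perp1 eps)^T *m psi R n *m perp1 eps) phiinv A <-> Egrp A.
Proof.
have [e' he' [epse' e'eps]] := Egrp_inverse heps.
have psi_sq := psi_sq R hn.
have -> : phiinv = perp1 e' *m - psi R n *m (perp1 e')^T.
  apply: (mulmx_inv_uniq _ hinv1).
  rewrite !perp1_tr !mulmxA -(mulmxA _ (perp1 e'^T)) perp1_mul -trmx_mul epse'.
  rewrite trmx1 perp1_1 mulmx1 -(mulmxA (perp1 e')) mulNmx psi_sq opprK mulmx1.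
  by rewrite perp1_mul e'eps perp1_1.
move=> A; rewrite Ephi_perp1 // -(Egrp_conj A heps he' e'eps).
by move: psi_sq; rewrite (psi_block R hn) => /Ephi_standardE.
Qed.
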